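(* For $O=(a,b)\in\mathbb{R}^2$ let $g_1(O):=\int_0^1\int_0^1\sqrt{(x-a)^2+(y-b)^2}\,dx\,dy$ (the expected distance from $O$ to a uniform random point of $[0,1]^2$). Then \begin{align*}g_1(O)=\;&A_1(a,b)+A_1(b,a)+A_1(b,1-a)+A_1(1-a,b)\\&+A_1(1-a,1-b)+A_1(1-b,1-a)+A_1(1-b,a)+A_1(a,1-b).\end{align*}
   Context: Define $A_1:\mathbb{R}^2\to\mathbb{R}$ by $A_1(a,b):=\int_0^a\int_0^{bx/a}\sqrt{x^2+y^2}\,dy\,dx$ if $a\ne0$ and $A_1(0,b):=0$ (integrals are oriented/signed). Equivalently, for $a\neq 0$, $A_1(a,b)=\frac{a^3}{6}\log\left(\frac{b}{|a|}+\sqrt{1+\frac{b^2}{a^2}}\right)+\frac{ab}{6}\sqrt{a^2+b^2}$. *)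

From Stdlib Require Import Reals.
From Coquelicot Require Import Coquelicot.
Open Scope R_scope.

(* A_1(a,b) := int_0^a int_0^{b x / a} sqrt(x^2+y^2) dy dx  (a <> 0),
   A_1(0,b) := 0.  Integrals are oriented (RInt f u v = - RInt f v u). *)
Definition A_1 (a b : R) : R :=
  if Req_EM_T a 0 then 0
  else RInt (fun x => RInt (fun y => sqrt (x ^ 2 + y ^ 2)) 0 (b * x / a)) 0 a.

Definition g_1 (a b : R) : R :=
  RInt (fun y => RInt (fun x => sqrt ((x - a) ^ 2 + (y - b) ^ 2)) 0 1) 0 1.

From Stdlib Require Import Reals Lra.
From Coquelicot Require Import Coquelicot.
Open Scope R_scope.

(* Let R(t,w) be the integral of the distance to the origin over the rectangle
   with opposite corners 0 and (t,w), i.e. the integral over c from 0 to w of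
   L(t,c) = int_0^t sqrt(s^2 + c^2) ds.  Cutting the rectangle along its
   diagonal suggests R(t,w) = A_1(t,w) + A_1(w,t).  Since
   A_1(a,b) = a^3/3 * L(b/|a|, 1), one computes that for w <> 0 the right-hand
   side has w-derivative L(t,w), as does R(t,.); so the difference is unchanged
   under w |-> theta*w for 0 < theta <= 1, while it is O(theta) as theta -> 0,
   hence zero.  Avoiding w = 0 spares us differentiating A_1(w,t) in w there.
   Finally g_1(a,b) is the signed inclusion-exclusion of the four rectangles
   with corner (a,b), and A_1 is odd in each argument. *)

Lemma abs_le_of_between_0 x t :
  Rmin 0 t <= x <= Rmax 0 t -> Rabs x <= Rabs t.
Proof.
  intros Hx. destruct (Rle_or_lt 0 t).
  - rewrite Rmin_left, Rmax_right in Hx by lra. rewrite !Rabs_pos_eq; lra.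
  - rewrite Rmin_right, Rmax_left in Hx by lra. rewrite !Rabs_left1; lra.
Qed.

Lemma abs_RInt_le_const_abs (f : R -> R) a b M :
  ex_RInt f a b -> (forall x, Rmin a b <= x <= Rmax a b -> Rabs (f x) <= M) ->
  Rabs (RInt f a b) <= Rabs (b - a) * M.
Proof. intros Hf HM. exact (norm_RInt_le_const_abs f a b _ M HM (RInt_correct f a b Hf)). Qed.

Lemma RInt_comp_shift (h : R -> R) p u v :
  (forall z, continuous h z) ->
  RInt (fun x => h (x - p)) u v = RInt h 0 (v - p) - RInt h 0 (u - p).
Proof.
  intros Hh.
  assert (Hex : forall c d, ex_RInt h c d)
    by (intros; apply (ex_RInt_continuous (V := R_CompleteNormedModule)); auto).
  transitivity (RInt h (u - p) (v - p)).
  - replace (u - p) with (1 * u + - p) by ring.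
    replace (v - p) with (1 * v + - p) by ring.
    rewrite <- (RInt_comp_lin h 1 (- p) u v) by apply Hex.
    apply RInt_ext; intros x _. change (scal 1 ?y) with (1 * y).
    rewrite Rmult_1_l. f_equal. ring.
  - rewrite <- (RInt_Chasles (V := R_CompleteNormedModule) h (u - p) 0 (v - p)) by apply Hex.
    rewrite <- (opp_RInt_swap (V := R_CompleteNormedModule) h 0 (u - p)) by apply Hex.
    unfold plus, opp; simpl. ring.
Qed.

Lemma RInt_comp_mul (h : R -> R) k t :
  (forall z, continuous h z) ->
  RInt (fun s => k * h (k * s)) 0 t = RInt h 0 (k * t).
Proof.
  intros Hh.
  pose proof (RInt_comp_lin h k 0 0 t) as E.
  rewrite Rmult_0_r, !Rplus_0_r in E.
  rewrite <- E by (apply (ex_RInt_continuous (V := R_CompleteNormedModule)); auto).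
  apply RInt_ext; intros s _. rewrite Rplus_0_r. reflexivity.
Qed.

Lemma lipschitz_continuous (f : R -> R) K :
  (forall x y, Rabs (f x - f y) <= K * Rabs (x - y)) -> forall x, continuous f x.
Proof.
  intros Hf x. apply continuity_pt_filterlim. intros eps Heps.
  assert (HK : 0 < Rabs K + 1) by (pose proof (Rabs_pos K); lra).
  exists (eps / (Rabs K + 1)). split; [apply Rdiv_lt_0_compat; lra|].
  intros y [_ Hy]. simpl in Hy |- *. unfold R_dist in *.
  apply (Rmult_lt_compat_l (Rabs K + 1)) in Hy; [|lra].
  replace ((Rabs K + 1) * (eps / (Rabs K + 1))) with eps in Hy by (field; lra).
  pose proof (Rabs_pos (y - x)). pose proof (Rle_abs K).
  specialize (Hf y x). nra.
Qed.

Lemma eq0_of_abs_le_scaled (x K : R) :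
  (forall th, 0 < th <= 1 -> Rabs x <= th * K) -> x = 0.
Proof.
  intros H. destruct (Req_dec x 0) as [|Hx]; [assumption|exfalso].
  pose proof (Rabs_pos_lt x Hx) as Ax.
  assert (HK : Rabs x <= K) by (rewrite <- (Rmult_1_l K); apply H; lra).
  specialize (H (Rabs x / (2 * K))).
  replace (Rabs x / (2 * K) * K) with (Rabs x / 2) in H by (field; lra).
  assert (Rabs x / (2 * K) <= 1).
  { apply (Rmult_le_reg_r (2 * K)); [lra|]. unfold Rdiv. rewrite Rmult_assoc, Rinv_l; lra. }
  assert (0 < Rabs x / (2 * K)) by (apply Rdiv_lt_0_compat; lra).
  lra.
Qed.

Lemma sqrt_sum_sq_le s c d :
  sqrt (s ^ 2 + c ^ 2) <= sqrt (s ^ 2 + d ^ 2) + Rabs (c - d).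
Proof.
  assert (Hd : Rabs d <= sqrt (s ^ 2 + d ^ 2)).
  { rewrite <- sqrt_Rsqr_abs. apply sqrt_le_1_alt. unfold Rsqr. nra. }
  assert (Hcross : d * (c - d) <= Rabs d * Rabs (c - d))
    by (rewrite <- Rabs_mult; apply Rle_abs).
  pose proof (Rabs_pos (c - d)). pose proof (pow2_abs (c - d)).
  pose proof (pow2_sqrt (s ^ 2 + d ^ 2) ltac:(nra)).
  rewrite <- (sqrt_pow2 (sqrt (s ^ 2 + d ^ 2) + Rabs (c - d)))
    by (pose proof (sqrt_pos (s ^ 2 + d ^ 2)); lra).
  apply sqrt_le_1_alt. nra.
Qed.

Lemma sqrt_sum_sq_lipschitz s c d :
  Rabs (sqrt (s ^ 2 + c ^ 2) - sqrt (s ^ 2 + d ^ 2)) <= Rabs (c - d).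
Proof.
  pose proof (sqrt_sum_sq_le s c d). pose proof (sqrt_sum_sq_le s d c).
  rewrite Rabs_minus_sym in H0. apply Rabs_le. lra.
Qed.

Lemma sqrt_sum_sq_div_abs s c : c <> 0 ->
  sqrt ((s / Rabs c) ^ 2 + 1) = sqrt (s ^ 2 + c ^ 2) / Rabs c.
Proof.
  intros Hc. pose proof (Rabs_pos_lt c Hc).
  rewrite <- (sqrt_pow2 (Rabs c)) at 2 by lra. rewrite <- sqrt_div by nra.
  f_equal. rewrite <- (pow2_abs c). field. lra.
Qed.

Definition line_dist_int (t c : R) : R := RInt (fun s => sqrt (s ^ 2 + c ^ 2)) 0 t.

Lemma continuous_sqrt_sum_sq c s : continuous (fun s => sqrt (s ^ 2 + c ^ 2)) s.
Proof.
  apply continuous_sqrt_comp, (ex_derive_continuous (fun s => s ^ 2 + c ^ 2)).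
  auto_derive. exact I.
Qed.

Lemma ex_RInt_sqrt_sum_sq c u v : ex_RInt (fun s => sqrt (s ^ 2 + c ^ 2)) u v.
Proof.
  apply (ex_RInt_continuous (V := R_CompleteNormedModule)).
  intros; apply continuous_sqrt_sum_sq.
Qed.

Lemma is_derive_line_dist_int t c :
  is_derive (fun t => line_dist_int t c) t (sqrt (t ^ 2 + c ^ 2)).
Proof.
  apply (is_derive_RInt (fun s => sqrt (s ^ 2 + c ^ 2)) _ 0).
  - apply filter_forall; intros u.
    apply (RInt_correct (V := R_CompleteNormedModule)), ex_RInt_sqrt_sum_sq.
  - apply continuous_sqrt_sum_sq.
Qed.

Lemma line_dist_int_scale t c : c <> 0 ->
  line_dist_int t c = c ^ 2 * line_dist_int (t / Rabs c) 1.
Proof.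
  intros Hc. pose proof (Rabs_pos_lt c Hc) as Ac.
  unfold line_dist_int.
  replace (t / Rabs c) with (/ Rabs c * t) by (unfold Rdiv; ring).
  rewrite <- RInt_comp_mul by apply continuous_sqrt_sum_sq.
  rewrite <- (RInt_scal (V := R_CompleteNormedModule)).
  2: { apply (ex_RInt_continuous (V := R_CompleteNormedModule)); intros z _.
       apply (continuous_mult (K := R_AbsRing)); [apply continuous_const|].
       apply (continuous_comp (fun s => / Rabs c * s) (fun s => sqrt (s ^ 2 + 1 ^ 2))).
       - apply (ex_derive_continuous (fun s => / Rabs c * s)). auto_derive. exact I.
       - apply continuous_sqrt_sum_sq. }
  apply RInt_ext; intros s _. change (scal ?k ?y) with (k * y).
  rewrite pow1.
  replace (/ Rabs c * s) with (s / Rabs c) by (unfold Rdiv; ring).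
  rewrite sqrt_sum_sq_div_abs by exact Hc.
  set (S := sqrt _). rewrite <- (pow2_abs c). simpl. field. lra.
Qed.

Lemma line_dist_int_oppl t c : line_dist_int (- t) c = - line_dist_int t c.
Proof.
  unfold line_dist_int.
  replace (- t) with (-1 * t) by ring.
  rewrite <- RInt_comp_mul by apply continuous_sqrt_sum_sq.
  rewrite <- (RInt_opp (V := R_CompleteNormedModule)) by apply ex_RInt_sqrt_sum_sq.
  apply RInt_ext; intros s _.
  replace ((-1 * s) ^ 2) with (s ^ 2) by ring. unfold opp; simpl. ring.
Qed.

Lemma abs_line_dist_int_le t c :
  Rabs (line_dist_int t c) <= Rabs t * (Rabs t + Rabs c).
Proof.
  unfold line_dist_int. rewrite <- (Rminus_0_r t) at 2.
  apply abs_RInt_le_const_abs; [apply ex_RInt_sqrt_sum_sq|].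
  intros s Hs. apply abs_le_of_between_0 in Hs.
  pose proof (Rabs_pos s). pose proof (Rabs_pos c).
  rewrite Rabs_pos_eq by apply sqrt_pos.
  rewrite <- (sqrt_pow2 (Rabs t + Rabs c)) by lra. apply sqrt_le_1_alt.
  rewrite <- (pow2_abs s), <- (pow2_abs c). nra.
Qed.

Lemma line_dist_int_lipschitz t c d :
  Rabs (line_dist_int t c - line_dist_int t d) <= Rabs t * Rabs (c - d).
Proof.
  unfold line_dist_int.
  change (?x - ?y) with (minus x y) at 1.
  rewrite <- (RInt_minus (V := R_CompleteNormedModule)) by apply ex_RInt_sqrt_sum_sq.
  rewrite <- (Rminus_0_r t) at 2.
  apply abs_RInt_le_const_abs.
  - apply (ex_RInt_minus (V := R_CompleteNormedModule)); apply ex_RInt_sqrt_sum_sq.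
  - intros s _. apply sqrt_sum_sq_lipschitz.
Qed.

Lemma continuous_line_dist_int t c : continuous (line_dist_int t) c.
Proof. exact (lipschitz_continuous _ _ (line_dist_int_lipschitz t) c). Qed.

Definition rect_dist_int (t w : R) : R := RInt (line_dist_int t) 0 w.

Lemma ex_RInt_line_dist_int t u v : ex_RInt (line_dist_int t) u v.
Proof.
  apply (ex_RInt_continuous (V := R_CompleteNormedModule)).
  intros; apply continuous_line_dist_int.
Qed.

Lemma abs_rect_dist_int_le t w :
  Rabs (rect_dist_int t w) <= Rabs w * (Rabs t * (Rabs t + Rabs w)).
Proof.
  unfold rect_dist_int. rewrite <- (Rminus_0_r w) at 2.
  apply abs_RInt_le_const_abs; [apply ex_RInt_line_dist_int|].
  intros c Hc. apply abs_le_of_between_0 in Hc.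
  eapply Rle_trans; [apply abs_line_dist_int_le|].
  pose proof (Rabs_pos t). nra.
Qed.

Lemma A_1_0l b : A_1 0 b = 0.
Proof. unfold A_1. destruct (Req_EM_T 0 0); [reflexivity | contradiction]. Qed.

Lemma A_1_closed_form a b : a <> 0 ->
  A_1 a b = a ^ 3 / 3 * line_dist_int (b / Rabs a) 1.
Proof.
  intros Ha. unfold A_1. destruct (Req_EM_T a 0) as [|_]; [contradiction|].
  set (K := line_dist_int (b / Rabs a) 1).
  transitivity (RInt (fun x => x ^ 2 * K) 0 a).
  - apply RInt_ext; intros x Hx.
    assert (Hx0 : x <> 0 /\ b * x / a / Rabs x = b / Rabs a).
    { destruct (Rlt_or_le 0 a).
      - rewrite Rmin_left, Rmax_right in Hx by lra.
        rewrite !Rabs_pos_eq by lra. split; [lra | field; lra].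
      - rewrite Rmin_right, Rmax_left in Hx by lra.
        rewrite !Rabs_left by lra. split; [lra | field; lra]. }
    destruct Hx0 as [Hx0 Hratio].
    unfold K. rewrite <- Hratio, <- line_dist_int_scale by exact Hx0.
    apply RInt_ext; intros y _. rewrite Rplus_comm. reflexivity.
  - apply is_RInt_unique.
    replace (a ^ 3 / 3 * K) with (minus (K * a ^ 3 / 3) (K * 0 ^ 3 / 3))
      by (unfold minus, plus, opp; simpl; field).
    apply (is_RInt_derive (fun x => K * x ^ 3 / 3)).
    + intros x _. auto_derive; [exact I | field].
    + intros x _. apply (ex_derive_continuous (fun x => x ^ 2 * K)). auto_derive. exact I.
Qed.

Lemma A_1_oppl a b : A_1 (- a) b = - A_1 a b.
Proof.
  destruct (Req_dec a 0) as [->|Ha].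
  - rewrite Ropp_0, A_1_0l. ring.
  - rewrite !A_1_closed_form, Rabs_Ropp by lra. field.
Qed.

Lemma A_1_oppr a b : A_1 a (- b) = - A_1 a b.
Proof.
  destruct (Req_dec a 0) as [->|Ha].
  - rewrite !A_1_0l. ring.
  - rewrite !A_1_closed_form by exact Ha. unfold Rdiv at 2 4.
    rewrite Ropp_mult_distr_l_reverse, line_dist_int_oppl. ring.
Qed.

Lemma abs_A_1_le a b :
  Rabs (A_1 a b) <= Rabs a * Rabs b * (Rabs a + Rabs b) / 3.
Proof.
  destruct (Req_dec a 0) as [->|Ha].
  - rewrite A_1_0l, !Rabs_R0. lra.
  - pose proof (Rabs_pos_lt a Ha) as Aa. pose proof (Rabs_pos b).
    rewrite A_1_closed_form, Rabs_mult by exact Ha.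
    pose proof (abs_line_dist_int_le (b / Rabs a) 1) as Hl.
    rewrite Rabs_R1, Rabs_div, Rabs_Rabsolu in Hl by lra.
    replace (Rabs (a ^ 3 / 3)) with (Rabs a ^ 3 / 3)
      by (rewrite Rabs_div, <- RPow_abs, (Rabs_pos_eq 3); lra).
    apply (Rmult_le_compat_l (Rabs a ^ 3 / 3)) in Hl;
      [|pose proof (pow_lt _ 3 Aa); lra].
    eapply Rle_trans; [exact Hl|]. right. field. lra.
Qed.

Lemma is_derive_A_1_r a b : is_derive (A_1 a) b (a * sqrt (a ^ 2 + b ^ 2) / 3).
Proof.
  destruct (Req_dec a 0) as [->|Ha].
  - apply (is_derive_ext (fun _ => 0)); [intros; symmetry; apply A_1_0l|].
    replace (0 * _ / 3) with 0 by field. apply (is_derive_const 0).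
  - pose proof (Rabs_pos_lt a Ha).
    apply (is_derive_ext (fun b => a ^ 3 / 3 * line_dist_int (b / Rabs a) 1));
      [intros; symmetry; apply A_1_closed_form, Ha|].
    auto_derive; [eexists; apply is_derive_line_dist_int|].
    rewrite (is_derive_unique _ _ _ (is_derive_line_dist_int _ 1)), pow1.
    change (b * / Rabs a) with (b / Rabs a). rewrite sqrt_sum_sq_div_abs by exact Ha.
    rewrite Rplus_comm.
    replace (a * (a * (a * 1))) with (a * Rabs a ^ 2) by (rewrite pow2_abs; ring).
    field. lra.
Qed.

Lemma is_derive_A_1_l a b : a <> 0 ->
  is_derive (fun a => A_1 a b) a (line_dist_int b a - b * sqrt (a ^ 2 + b ^ 2) / 3).
Proof.
  intros Ha. pose proof (Rabs_pos_lt a Ha).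
  apply (is_derive_ext_loc (fun a => a ^ 3 / 3 * line_dist_int (b / Rabs a) 1)).
  { apply (filter_imp (fun x => x <> 0)); [intros; symmetry; apply A_1_closed_form; assumption|].
    exists (mkposreal _ H). intros x Hx ->. apply (Rlt_irrefl (Rabs a)).
    change (Rabs (0 - a) < Rabs a) in Hx. rewrite Rminus_0_l, Rabs_Ropp in Hx. exact Hx. }
  auto_derive; [repeat split; try (eexists; apply is_derive_line_dist_int); lra|].
  rewrite (is_derive_unique _ _ _ (is_derive_line_dist_int _ 1)), pow1.
  change (b * / Rabs a) with (b / Rabs a).
  rewrite sqrt_sum_sq_div_abs, (line_dist_int_scale b a) by exact Ha.
  rewrite (Rplus_comm (b ^ 2)).
  set (L := line_dist_int (b / Rabs a) 1). set (S := sqrt (a ^ 2 + b ^ 2)).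
  destruct (Rdichotomy _ _ Ha);
    [rewrite sign_eq_m1, Rabs_left by lra | rewrite sign_eq_1, Rabs_pos_eq by lra];
    field; lra.
Qed.

Lemma is_derive_A_1_sum t x : x <> 0 ->
  is_derive (fun x => A_1 t x + A_1 x t) x (line_dist_int t x).
Proof.
  intros Hx.
  replace (line_dist_int t x) with
    (t * sqrt (t ^ 2 + x ^ 2) / 3 + (line_dist_int t x - t * sqrt (x ^ 2 + t ^ 2) / 3))
    by (rewrite (Rplus_comm (t ^ 2)); ring).
  apply (is_derive_plus (A_1 t) (fun x => A_1 x t)).
  - apply is_derive_A_1_r.
  - apply is_derive_A_1_l, Hx.
Qed.

Lemma rect_dist_int_sub_A_1_scale t w th : 0 < th <= 1 ->
  rect_dist_int t (th * w) - (A_1 t (th * w) + A_1 (th * w) t)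
  = rect_dist_int t w - (A_1 t w + A_1 w t).
Proof.
  intros Hth. destruct (Req_dec w 0) as [->|Hw]; [rewrite Rmult_0_r; reflexivity|].
  assert (Hftc : RInt (line_dist_int t) (th * w) w
                 = (A_1 t w + A_1 w t) - (A_1 t (th * w) + A_1 (th * w) t)).
  { apply is_RInt_unique, (is_RInt_derive (fun x => A_1 t x + A_1 x t)).
    - intros x Hx. apply is_derive_A_1_sum.
      destruct (Rdichotomy _ _ Hw).
      + rewrite Rmin_right, Rmax_left in Hx by nra. nra.
      + rewrite Rmin_left, Rmax_right in Hx by nra. nra.
    - intros; apply continuous_line_dist_int. }
  unfold rect_dist_int.
  rewrite <- (RInt_Chasles (V := R_CompleteNormedModule) _ 0 (th * w) w)
    by apply ex_RInt_line_dist_int.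
  rewrite Hftc. unfold plus; simpl. ring.
Qed.

Lemma abs_rect_dist_int_sub_A_1_le t v :
  Rabs (rect_dist_int t v - (A_1 t v + A_1 v t))
  <= 5 / 3 * Rabs v * (Rabs t * (Rabs t + Rabs v)).
Proof.
  pose proof (abs_rect_dist_int_le t v).
  pose proof (abs_A_1_le t v). pose proof (abs_A_1_le v t).
  pose proof (Rabs_triang (A_1 t v) (A_1 v t)).
  pose proof (Rabs_triang (rect_dist_int t v) (- (A_1 t v + A_1 v t))).
  rewrite Rabs_Ropp in *. unfold Rminus. lra.
Qed.

Lemma rect_dist_int_eq_A_1 t w : rect_dist_int t w = A_1 t w + A_1 w t.
Proof.
  apply Rminus_diag_uniq.
  apply (eq0_of_abs_le_scaled _ (5 / 3 * Rabs w * (Rabs t * (Rabs t + Rabs w)))).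
  intros th Hth. rewrite <- (rect_dist_int_sub_A_1_scale t w th Hth).
  eapply Rle_trans; [apply abs_rect_dist_int_sub_A_1_le|].
  rewrite Rabs_mult, (Rabs_pos_eq th) by lra.
  pose proof (Rabs_pos t). pose proof (Rabs_pos w).
  assert (0 <= th * Rabs w * Rabs t * ((1 - th) * Rabs w))
    by (repeat apply Rmult_le_pos; lra).
  nra.
Qed.

Lemma g_1_rect_dist_int a b :
  g_1 a b = rect_dist_int (1 - a) (1 - b) - rect_dist_int (1 - a) (- b)
          - rect_dist_int (- a) (1 - b) + rect_dist_int (- a) (- b).
Proof.
  unfold g_1.
  transitivity (RInt (fun y => line_dist_int (1 - a) (y - b) - line_dist_int (- a) (y - b)) 0 1).
  { apply RInt_ext; intros y _.
    etransitivity; [apply (RInt_comp_shift (fun s => sqrt (s ^ 2 + (y - b) ^ 2)))|].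
    - apply continuous_sqrt_sum_sq.
    - rewrite Rminus_0_l. reflexivity. }
  assert (Hcont : forall t z, continuous (fun y => line_dist_int t (y - b)) z).
  { intros t z. apply (continuous_comp (fun y => y - b) (line_dist_int t)).
    - apply (ex_derive_continuous (fun y => y - b)). auto_derive. exact I.
    - apply continuous_line_dist_int. }
  change (?x - ?y) with (minus x y) at 1.
  rewrite (RInt_minus (V := R_CompleteNormedModule))
    by (apply (ex_RInt_continuous (V := R_CompleteNormedModule)); intros; apply Hcont).
  unfold rect_dist_int.
  rewrite !(RInt_comp_shift (line_dist_int _)) by apply continuous_line_dist_int.
  rewrite !Rminus_0_l. unfold minus, plus, opp; simpl. ring.
Qed.

Theorem theorem24 (a b : R) :
  g_1 a b =
    A_1 a b + A_1 b a + A_1 b (1 - a) + A_1 (1 - a) b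
  + A_1 (1 - a) (1 - b) + A_1 (1 - b) (1 - a) + A_1 (1 - b) a + A_1 a (1 - b).
Proof.
  rewrite g_1_rect_dist_int, !rect_dist_int_eq_A_1, !A_1_oppl, !A_1_oppr.
  ring.
Qed.
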